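(* Let $B$ be a real-valued standard Brownian motion with $B_0=0$. With probability one, there exists an integer $N\ge1$ such that for every $n\ge N$ and every integer $\ell\in[2^{n-1},2^n-n^{3/2}]$, at least one of the intervals $I_k=[\ell+k,\ell+k+1]$, for integers $k$ with $0\le k\le n^{3/2}-1$, satisfies $\mathrm{Osc}_{I_k}(B)>\log\log n$.
   Context: For a function $f:\mathbb R^+\to\mathbb R$ and an interval $I\subset\mathbb R^+$, $\mathrm{Osc}_I(f)=\sup_I f-\inf_I f$. *)

From HB Require Import structures.
From mathcomp Require Import all_boot all_order all_algebra.
From mathcomp Require Import all_classical all_reals all_analysis.
Set Implicit Arguments. Unset Strict Implicit. Unset Printing Implicit Defensive.
Import Order.TTheory GRing.Theory Num.Theory.
Import numFieldNormedType.Exports.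
Local Open Scope classical_set_scope.
Local Open Scope ring_scope.

Definition Osc {R : realType} (f : R -> R) (a b : R) : R :=
  sup [set f x | x in `[a, b]] - inf [set f x | x in `[a, b]].

(* Standard real Brownian motion B (time first, then sample point) on the
   probability space (T, P), time parameter t >= 0:
   - each B t is a random variable;
   - B 0 = 0 and every path t |-> B t w is continuous on [0, +oo);
   - for 0 <= s < t, B t - B s has law N(0, t - s)
     (normal_prob takes the standard deviation);
   - increments over consecutive disjoint intervals are mutually independent:
     for any 0 <= t_0 < t_1 < ... < t_n and Borel sets A_0,...,A_{n-1},
     P(forall i < n, B t_{i+1} - B t_i \in A_i) = prod_i P(B t_{i+1} - B t_i \in A_i). *)
Definition is_standard_BM {R : realType} {d : measure_display}
  {T : measurableType d} (P : probability T R) (B : R -> T -> R) : Prop :=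
  [/\ (forall t, 0 <= t -> measurable_fun setT (B t)),
      (forall w, B 0 w = 0),
      (forall w, {within `[0, +oo[, continuous (fun t => B t w)}),
      (forall s t, 0 <= s -> s < t -> forall A : set R, measurable A ->
          P [set w | B t w - B s w \in A] = normal_prob 0 (Num.sqrt (t - s)) A)
    & (forall (n : nat) (tt : nat -> R) (A : nat -> set R),
          0 <= tt 0%N -> (forall i, (i < n)%N -> tt i < tt i.+1) ->
          (forall i, measurable (A i)) ->
          P [set w | forall i, (i < n)%N -> B (tt i.+1) w - B (tt i) w \in A i]
          = \big[*%E/1%E]_(i < n)
              P [set w | B (tt i.+1) w - B (tt i) w \in A i])].

From HB Require Import structures.
From mathcomp Require Import all_boot all_order all_algebra.
From mathcomp Require Import all_classical all_reals all_analysis.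
From mathcomp Require Import lra zify measurable_realfun.
Set Implicit Arguments. Unset Strict Implicit. Unset Printing Implicit Defensive.
Import Order.TTheory GRing.Theory Num.Theory.
Import numFieldNormedType.Exports.
Local Open Scope classical_set_scope.
Local Open Scope ring_scope.

(* Borel-Cantelli.  For large n put c = ln (ln n) and m = floor (n^(3/2)).  The
   m increments of B over consecutive unit intervals starting at an integer l
   are independent N(0,1) variables, each of which lies in [-c, c] with
   probability at most 1 - phi (c + 1), phi the standard normal density (phi is
   decreasing on ]c, c + 1], an interval of length 1).  As phi (c + 1) m >= 3n,
   some block starting at an l < 2^n has all its increments in [-c, c] with
   probability at most 2^n e^(-3n) <= 2^-(n+1), which is summable.  Finally the
   oscillation of B over a unit interval dominates the modulus of the increment
   of B over it. *)

Lemma normB_le_Osc (R : realType) (f : R -> R) (a b : R) : a <= b ->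
  {within `[a, b], continuous f} -> `|f b - f a| <= Osc f a b.
Proof.
move=> ab cf.
have [xM _ leM] := EVT_max ab cf.
have [xm _ gem] := EVT_min ab cf.
set S := [set f x | x in `[a, b]].
have ubS : has_ubound S by exists (f xM) => _ [x /leM ? <-].
have lbS : has_lbound S by exists (f xm) => _ [x /gem ? <-].
have Sa : S (f a) by exists a => //=; rewrite in_itv /= lexx ab.
have Sb : S (f b) by exists b => //=; rewrite in_itv /= lexx ab.
have := ub_le_sup ubS Sa; have := ub_le_sup ubS Sb.
have := ge_inf lbS Sa; have := ge_inf lbS Sb.
rewrite /Osc -/S; have [/ger0_norm -> | /ltr0_norm ->] := lerP 0 (f b - f a); lra.
Qed.

Section standard_normal.
Variable R : realType.

Lemma normal_peak1_ge : 3^-1 <= normal_peak (1 : R).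
Proof.
rewrite /normal_peak expr1n mul1r.
have p4 : pi < 4 :> R by have := pihalf_lt2 R; lra.
have s0 : 0 < Num.sqrt (pi *+ 2) :> R.
  by rewrite sqrtr_gt0 -mulr_natr mulr_gt0 ?pi_gt0.
rewrite lef_pV2 ?posrE //.
have -> : 3 = Num.sqrt (3 ^+ 2) :> R by rewrite sqrtr_sqr ger0_norm.
rewrite ler_sqrt // -mulr_natr.
lra.
Qed.

Lemma normal_pdf_le_prob_itv (c : R) : 0 <= c ->
  ((normal_pdf 0 1 (c + 1))%:E <= normal_prob 0 1 `]c, (c + 1)%R])%E.
Proof.
move=> c0.
have Ic : (lebesgue_measure [set` `]c, (c + 1)%R]] = 1)%E.
  by rewrite lebesgue_measure_itv /= lte_fin ltrDl ltr01 -EFinD addrAC subrr add0r.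
rewrite -[X in (X <= _)%E]mule1 -Ic -integral_cst //.
apply: ge0_le_integral => //.
- by move=> x _; rewrite lee_fin normal_pdf_ge0.
- by apply/measurable_EFinP/measurable_funTS; exact: measurable_normal_pdf.
- move=> x /=; rewrite in_itv /= => /andP [cx xc].
  rewrite lee_fin !normal_pdfE ?oner_neq0 //= ler_wpM2l ?normal_peak_ge0 //.
  rewrite ler_expR !expr1n !mulNr lerN2 ler_pM2r ?invr_gt0 // !subr0.
  nra.
Qed.

Lemma normal_prob_itv_le (c : R) : 0 <= c ->
  (normal_prob 0 1 `[(- c)%R, c] <= (1 - normal_pdf 0 1 (c + 1))%:E)%E.
Proof.
move=> c0.
rewrite -[X in normal_prob 0 1 X]setCK probability_setC; last exact: measurableC.
rewrite EFinB leeB // (le_trans (normal_pdf_le_prob_itv c0)) //.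
apply: le_measure; rewrite ?inE //=; first exact: measurableC.
by move=> x /=; rewrite !in_itv /= => /andP [? ?] /andP [? ?]; lra.
Qed.

End standard_normal.

Section lnln_estimates.
Variable R : realType.

(* The margin 22 yields expR 11 >= 12 below, which offsets normal_peak 1 >= 1/3
   and leaves the constant 4. *)
Lemma sqr_addr1_le_expR (c : R) : 9 <= c -> (c + 1) ^+ 2 + 22 <= expR c.
Proof.
move=> c9; have := @expR_ge1Dxn R c 2 (le_trans _ c9).
rewrite (_ : 3`!%:R = 6) //; nra.
Qed.

Lemma ln_ge_of_expR_le (x y : R) : 0 < y -> expR x <= y -> x <= ln y.
Proof. by move=> y0 xy; rewrite -(expRK x) ler_ln // posrE expR_gt0. Qed.

Lemma lnln_ge9 (x : R) : expR (expR 9) <= x -> 9 <= ln (ln x).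
Proof.
move=> hx; have x0 : 0 < x by apply: lt_le_trans hx; exact: expR_gt0.
have lnx := ln_ge_of_expR_le x0 hx.
by apply: (ln_ge_of_expR_le _ lnx); apply: lt_le_trans lnx; exact: expR_gt0.
Qed.

Lemma normal_pdf_lnln_mul_sqrt_ge (x : R) : expR (expR 9) <= x ->
  4 <= normal_pdf 0 1 (ln (ln x) + 1) * Num.sqrt x.
Proof.
move=> hx.
have x0 : 0 < x by apply: lt_le_trans hx; exact: expR_gt0.
have lnx0 : 0 < ln x.
  by apply: lt_le_trans (ln_ge_of_expR_le x0 hx); exact: expR_gt0.
have sqrtx : Num.sqrt x = expR (ln x / 2).
  rewrite {1}(_ : x = expR (ln x / 2) ^+ 2); last first.
    by rewrite -expRM_natr -mulr_natr divfK ?pnatr_eq0 // lnK.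
  by rewrite sqrtr_sqr ger0_norm ?expR_ge0.
have c9 := lnln_ge9 hx.
rewrite -(lnK (lnx0 : ln x \in Num.pos)) in sqrtx.
set c := ln (ln x) in c9 sqrtx *.
rewrite sqrtx normal_pdfE ?oner_neq0 //= /normal_fun subr0 expr1n -mulrA -expRD.
have e11 : 12 <= expR (- (c + 1) ^+ 2 / (1 *+ 2) + expR c / 2).
  apply: le_trans (expR_ge1Dx _); have := sqr_addr1_le_expR c9; lra.
have := normal_peak1_ge R; have := normal_peak_ge0 (1 : R); nra.
Qed.

Lemma powR32 (a : R) : 0 < a -> a `^ (3 / 2) = a * Num.sqrt a.
Proof.
move=> a0; rewrite (_ : 3 / 2 = 1 + 2^-1); last by lra.
by rewrite powRD ?powRr1 ?powR12_sqrt ?ltW ?gt_eqF ?implybT.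
Qed.

Definition block_size (n : nat) : nat := Num.truncn ((n%:R : R) `^ (3 / 2)).

Lemma block_size_le n : (block_size n)%:R <= (n%:R : R) `^ (3 / 2).
Proof. by have /andP [] := truncn_itv (powR_ge0 (n%:R : R) (3 / 2)). Qed.

Lemma block_size_ge n : (0 < n)%N ->
  n%:R * Num.sqrt n%:R - 1 <= (block_size n)%:R :> R.
Proof.
move=> n0; have /andP [_] := truncn_itv (powR_ge0 (n%:R : R) (3 / 2)).
by rewrite /block_size powR32 ?ltr0n // -natr1; lra.
Qed.

Lemma normal_pdf_lnln_mul_block_size_ge n : expR (expR 9) <= (n%:R : R) ->
  3 * n%:R <= normal_pdf 0 1 (ln (ln (n%:R : R)) + 1) * (block_size n)%:R.
Proof.
move=> hn.
have n4 : 4 <= (n%:R : R).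
  have := expR_ge1Dx (expR 9 : R); have := expR_ge1Dx (9 : R); lra.
have s1 : 1 <= Num.sqrt (n%:R : R).
  by rewrite -[leLHS]sqrtr1 ler_sqrt //; lra.
have m_ge : 3 / 4 * (n%:R * Num.sqrt n%:R) <= (block_size n)%:R :> R.
  have : (0 < n)%N by rewrite -(ltr0n R); lra.
  by move/block_size_ge; nra.
have ps := normal_pdf_lnln_mul_sqrt_ge hn.
have p0 := normal_pdf_ge0 0 1 (ln (ln (n%:R : R)) + 1).
nra.
Qed.

Lemma expR_mul_pow2_le n : (0 < n)%N ->
  expR (- (3 * n%:R)) *+ 2 ^ n <= 1 / (2 ^ n.+1)%:R :> R.
Proof.
move=> n0.
have le_expR : 2 ^+ (3 * n) <= expR (3 * n%:R) :> R.
  rewrite -[3 * _]mulr1 -natrM expRM_natl lerXn2r ?nnegrE ?expR_ge0 //.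
  by have := expR_ge1Dx (1 : R); lra.
have le_pow2 : 2 ^+ n * 2 ^+ n.+1 <= 2 ^+ (3 * n) :> R.
  by rewrite -exprD ler_eXn2l ?ltr1n //; lia.
rewrite expRN -(mulr_natr _ (2 ^ n)) !natrX div1r mulrC -invf_div.
rewrite lef_pV2 ?posrE ?divr_gt0 ?expR_gt0 ?exprn_gt0 // ler_pdivlMr ?exprn_gt0 //.
by rewrite mulrC (le_trans le_pow2).
Qed.

End lnln_estimates.

Lemma ae_eventually_notin d (T : measurableType d) (R : realType)
    (mu : {measure set T -> \bar R}) (F : (set T)^nat) :
  (forall n, measurable (F n)) -> (\sum_(n <oo) mu (F n) < +oo)%E ->
  {ae mu, forall w, exists K, forall n, (K <= n)%N -> ~ F n w}.
Proof.
move=> mF sumF; exists (lim_sup_set F); split.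
- by apply: bigcap_measurableType => K _; exact: bigcup_measurable.
- exact: lim_sup_set_cvg0.
- move=> w /= notev K _; apply: contrapT => noF; apply: notev.
  by exists K => n Kn Fn; apply: noF; exists n.
Qed.

Section brownian_increments.
Context (R : realType) (d : measure_display) (T : measurableType d).
Variables (P : probability T R) (B : R -> T -> R).
Hypothesis BM : is_standard_BM P B.

Definition small_increments (c a : R) (m : nat) : set T :=
  [set w | forall i, (i < m)%N -> `|B (a + i.+1%:R) w - B (a + i%:R) w| <= c].

Lemma small_incrementsE (c a : R) (m : nat) : small_increments c a m =
  [set w | forall i, (i < m)%N ->
     B (a + i.+1%:R) w - B (a + i%:R) w \in [set` `[- c, c]]].
Proof.
by apply/seteqP; split => w /= h i /h; rewrite inE /= in_itv /= ler_norml.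
Qed.

Lemma measurable_increment_in (s t : R) (A : set R) : 0 <= s -> 0 <= t ->
  measurable A -> measurable [set w | B t w - B s w \in A].
Proof.
case: BM => mB _ _ _ _ s0 t0 mA.
have := measurable_funB (mB t t0) (mB s s0) measurableT mA; rewrite setTI.
by congr measurable; apply/seteqP; split => w /=; rewrite inE.
Qed.

Lemma measurable_small_increments (c a : R) (m : nat) : 0 <= a ->
  measurable (small_increments c a m).
Proof.
move=> a0; rewrite small_incrementsE.
have -> : [set w | forall i, (i < m)%N ->
    B (a + i.+1%:R) w - B (a + i%:R) w \in [set` `[- c, c]]] =
  \bigcap_(i in `I_m)
    [set w | B (a + i.+1%:R) w - B (a + i%:R) w \in [set` `[- c, c]]].
  by apply/seteqP; split => w /= h i /h.
apply: bigcap_measurableType => i _.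
by apply: measurable_increment_in; rewrite ?addr_ge0.
Qed.

Lemma prob_small_increments (c a : R) (m : nat) : 0 <= a ->
  P (small_increments c a m) = (normal_prob 0 1 `[(- c)%R, c] ^+ m)%E.
Proof.
case: BM => _ _ _ law indep a0.
rewrite small_incrementsE.
rewrite (indep m (fun i => a + i%:R) (fun=> [set` `[- c, c]])) //=;
  [|by rewrite addr0|by move=> i _; rewrite ltrD2l ltr_nat].
rewrite -[RHS]mule1 -iter_mule -big_const_ord; apply: eq_bigr => i _.
rewrite law ?addr_ge0 ?ltrD2l ?ltr_nat //.
have -> : a + i.+1%:R - (a + i%:R) = 1 by rewrite -natr1; lra.
by rewrite sqrtr1.
Qed.

Lemma prob_small_increments_le (c a : R) (m : nat) : 0 <= c -> 0 <= a ->
  (P (small_increments c a m) <= (expR (- (normal_pdf 0 1 (c + 1) * m%:R)))%:E)%E.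
Proof.
move=> c0 a0; rewrite prob_small_increments //.
have := normal_prob_itv_le c0; set p := normal_prob 0 1 _ => p_le.
have p0 : (0 <= p)%E by exact: measure_ge0.
have pfin : p \is a fin_num.
  by rewrite ge0_fin_numE // (le_lt_trans (probability_le1 _ _)) ?ltry.
rewrite -(fineK pfin) !lee_fin in p0 p_le.
rewrite -(fineK pfin) -EFin_expe lee_fin -mulNr expRM_natr.
apply: lerXn2r; rewrite ?nnegrE ?expR_ge0 //.
exact: le_trans p_le (expR_ge1Dx _).
Qed.

Lemma Osc_gt_of_not_small_increments (c a : R) (m : nat) (w : T) : 0 <= a ->
  ~ small_increments c a m w ->
  exists2 k : nat, (k < m)%N &
    c < Osc (fun t => B t w) (a + k%:R) (a + k%:R + 1).
Proof.
case: BM => _ _ cB _ _ a0 /existsNP [k /not_implyP [km /negP]].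
rewrite -ltNge -natr1 addrA => lt_c; exists k => //.
apply: lt_le_trans lt_c (normB_le_Osc _ _); first by rewrite lerDl.
apply: continuous_subspaceW (cB w) => x /=; rewrite !in_itv /= andbT.
by move=> /andP [+ _]; apply: le_trans; rewrite addr_ge0.
Qed.

Definition lnln_threshold : nat := (Num.truncn (expR (expR 9) : R)).+1.

Lemma lnln_threshold_le (n : nat) :
  (lnln_threshold <= n)%N -> expR (expR 9) <= (n%:R : R).
Proof. by move=> h; rewrite ltW // (lt_le_trans (truncnS_gt _)) // ler_nat. Qed.

(* Emptied below the threshold, so that its probability bound holds for all n. *)
Definition small_block_event (n : nat) : set T :=
  if (lnln_threshold <= n)%N then
    \bigcup_(l < 2 ^ n) small_increments (ln (ln n%:R)) l%:R (block_size R n)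
  else set0.

Lemma measurable_small_block_event (n : nat) : measurable (small_block_event n).
Proof.
rewrite /small_block_event; case: ifP => // _.
by apply: bigcup_measurable => l _; exact: measurable_small_increments.
Qed.

Lemma prob_small_block_event_le (n : nat) :
  (P (small_block_event n) <= (1 / (2 ^ n.+1)%:R)%:E)%E.
Proof.
rewrite /small_block_event; case: ifP => [le_n|_]; last first.
  by rewrite measure0 lee_fin divr_ge0.
have n_large := lnln_threshold_le le_n.
have n0 : (0 < n)%N by apply: leq_trans le_n.
have c0 : 0 <= ln (ln (n%:R : R)) by apply: le_trans (lnln_ge9 n_large).
set c := ln (ln (n%:R : R)) in c0 *.
rewrite bigcup_mkord (le_trans (@Boole_inequality _ _ _ P
    (fun l => small_increments c l%:R (block_size R n)) _ _)) //.
  by move=> l _; exact: measurable_small_increments.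
apply: le_trans.
  by apply: lee_sum => l _; exact: (prob_small_increments_le _ c0 (ler0n _ l)).
rewrite sumEFin lee_fin sumr_const card_ord.
apply: le_trans (expR_mul_pow2_le R n0); apply: ler_wMn2r.
by rewrite ler_expR lerN2 normal_pdf_lnln_mul_block_size_ge.
Qed.

Lemma small_block_event_summable :
  (\sum_(n <oo) P (small_block_event n) < +oo)%E.
Proof.
apply: (@le_lt_trans _ _ 1%E); last exact: ltry.
apply: le_trans (epsilon_trick0 xpredT (@ler01 R)).
by apply: lee_nneseries => [n _ _|n _];
  [exact: measure_ge0|exact: prob_small_block_event_le].
Qed.

End brownian_increments.

Theorem lemma5 (R : realType) (d : measure_display) (T : measurableType d)
  (P : probability T R) (B : R -> T -> R) :
  is_standard_BM P B ->
  {ae P, forall w, exists N : nat, (1 <= N)%N /\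
    forall n : nat, (N <= n)%N ->
    forall l : nat, (2 ^ n.-1 <= l)%N ->
      (l%:R : R) <= 2 ^+ n - n%:R `^ (3 / 2) ->
      exists k : nat, (k%:R : R) <= n%:R `^ (3 / 2) - 1 /\
        ln (ln (n%:R : R)) < Osc (fun t => B t w) (l%:R + k%:R) (l%:R + k%:R + 1)}.
Proof.
move=> BM.
have := ae_eventually_notin (measurable_small_block_event BM)
  (small_block_event_summable BM).
apply: filterS => w [K notF]; exists (maxn K (lnln_threshold R)).
split => [|n]; first by rewrite leq_max orbT.
rewrite geq_max => /andP [Kn le_n] l _ l_le.
have l_lt : (l < 2 ^ n)%N.
  rewrite -(ltr_nat R) natrX (le_lt_trans l_le) // gtrBl powR_gt0 // ltr0n.
  exact: leq_trans le_n.
have : ~ small_increments B (ln (ln n%:R)) l%:R (block_size R n) w.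
  by move=> small; apply: (notF n Kn); rewrite /small_block_event le_n; exists l.
case/(Osc_gt_of_not_small_increments BM (ler0n _ l)) => k k_lt Osc_gt.
exists k; split => //.
have := block_size_le R n.
have : k.+1%:R <= (block_size R n)%:R :> R by rewrite ler_nat.
rewrite -natr1; lra.
Qed.
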